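(* Let $T$ be a commutative ring with identity, $S$ a unital subring of $T$ and $I$ a non-zero nil ideal of $T$ such that $T=S+I$ and $S\cap I=\{0\}$. The following are equivalent: (1) $T$ is semi-complemented; (2) $T$ has Property $D$; (3) $S$ has Property $D$ and $I$ is a torsion-free $S$-module.
   Context: All rings are commutative with identity $\neq 0$. $\mathfrak{N}(R)$ is the nilradical and $\mathrm{reg}(R)$ the set of regular elements (non-zero-divisors) of $R$. An element $a$ is complemented if there is $b$ with $ab=0$ and $a+b\in\mathrm{reg}(R)$. $R$ is semi-complemented if every element of $R\setminus\mathfrak{N}(R)$ is complemented. $R$ has Property $D$ if $R\setminus\mathfrak{N}(R)=\mathrm{reg}(R)$. An ideal is nil if it consists of nilpotent elements. An $S$-module $M$ is torsion-free if $rm=0$ with $r\in\mathrm{reg}(S)$, $m\in M$ implies $m=0$. *)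

From HB Require Import structures.
From mathcomp Require Import all_boot all_algebra.
Set Implicit Arguments. Unset Strict Implicit. Unset Printing Implicit Defensive.
Import GRing.Theory.
Local Open Scope ring_scope.

Definition nilpotent_el (R : comNzRingType) (x : R) : Prop :=
  exists n : nat, x ^+ n = 0.

Definition regular_el (R : comNzRingType) (x : R) : Prop :=
  forall y : R, x * y = 0 -> y = 0.

Definition complemented (R : comNzRingType) (a : R) : Prop :=
  exists b : R, a * b = 0 /\ regular_el (a + b).

Definition semi_complemented (R : comNzRingType) : Prop :=
  forall a : R, ~ nilpotent_el a -> complemented a.

Definition propertyD (R : comNzRingType) : Prop :=
  forall a : R, ~ nilpotent_el a <-> regular_el a.

Definition is_ideal (R : comNzRingType) (I : {pred R}) : Prop :=
  [/\ 0 \in I,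
      (forall x y, x \in I -> y \in I -> x + y \in I),
      (forall x, x \in I -> - x \in I) &
      (forall r x, x \in I -> r * x \in I)].

Definition nil_ideal (R : comNzRingType) (I : {pred R}) : Prop :=
  is_ideal I /\ (forall x, x \in I -> nilpotent_el x).

(* I, viewed as an S-module via f : S -> T, is torsion-free *)
Definition torsion_free_via (S T : comNzRingType) (f : S -> T) (I : {pred T}) : Prop :=
  forall (r : S) (m : T), regular_el r -> m \in I -> f r * m = 0 -> m = 0.

From HB Require Import structures.
From mathcomp Require Import all_boot all_algebra.
From mathcomp Require Import ring.
From Stdlib Require Import Classical_Prop.
Import GRing.Theory.
Local Open Scope ring_scope.
Set Implicit Arguments. Unset Strict Implicit.

(* If a is not nilpotent and b complements it, then for every x in the nil
   ideal I the element a + x is still not nilpotent, hence complemented, and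
   this forces b x = 0.  Were b not nilpotent, symmetrically a x = 0, so
   (a + b) x = 0 and I = 0; hence b is nilpotent and a = (a + b) - b is regular.
   For T = S + I, let s be regular in S and (f s + i) y = 0 with y = f s' + j.
   The S-component gives s s' = 0, so s' = 0, and then (f s)^k j = (-i)^k j = 0
   for large k, so j = 0 by torsion-freeness. *)

Section Nilpotent.

Variable R : comNzRingType.
Implicit Types a b n u x y : R.

Lemma regular_not_nilpotent x : regular_el x -> ~ nilpotent_el x.
Proof.
move=> rx [k]; elim: k => [|k IHk].
  by rewrite expr0 => /eqP; rewrite oner_eq0.
by move=> xk0; apply: IHk; apply: rx; rewrite -exprS.
Qed.

Lemma regularM x y : regular_el x -> regular_el y -> regular_el (x * y).
Proof. by move=> rx ry z; rewrite -mulrA => /rx /ry. Qed.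

Lemma regularX x k : regular_el x -> regular_el (x ^+ k).
Proof.
move=> rx; elim: k => [|k IHk]; first by move=> y; rewrite expr0 mul1r.
by rewrite exprS; apply: regularM.
Qed.

Lemma nilpotentN n : nilpotent_el n -> nilpotent_el (- n).
Proof. by case=> k nk; exists k; rewrite exprNn nk mulr0. Qed.

Lemma nilpotentMl b n : nilpotent_el n -> nilpotent_el (b * n).
Proof. by case=> k nk; exists k; rewrite exprMn nk mulr0. Qed.

Lemma nilpotent_of_expr x k : nilpotent_el (x ^+ k) -> nilpotent_el x.
Proof. by case=> m xkm; exists (k * m)%N; rewrite exprM. Qed.

Lemma mulr_addr_nilpotent_exp u n y :
  (u + n) * y = 0 -> nilpotent_el n -> exists k, u ^+ k * y = 0.
Proof.
move=> uny0 [k nk]; exists k.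
have uy : u * y = - n * y by apply/eqP; rewrite -subr_eq0 mulNr opprK -mulrDl uny0.
suff -> : u ^+ k * y = (- n) ^+ k * y by rewrite exprNn nk mulr0 mul0r.
elim: k {nk} => [|k IHk]; first by rewrite !expr0.
by rewrite !exprS -!mulrA -IHk mulrCA uy mulrCA.
Qed.

Lemma regularD_nilpotent u n :
  regular_el u -> nilpotent_el n -> regular_el (u + n).
Proof.
move=> ru nn y uny0; have [k uky0] := mulr_addr_nilpotent_exp uny0 nn.
exact: regularX ru _ uky0.
Qed.

(* If d complements c = a + n, then g = b c = b n is nilpotent and satisfies
   g^2 = g v for the regular v = (a + b)(c + d); hence g = 0. *)
Lemma complemented_addr_nilpotent a b n :
  a * b = 0 -> regular_el (a + b) -> nilpotent_el n ->
  complemented (a + n) -> b * n = 0.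
Proof.
move=> ab0 rab nn [d [cd0 rcd]]; set c := a + n in cd0 rcd.
set g := b * c; set v := (a + b) * (c + d).
have gE : g = b * n by rewrite /g /c mulrDr (mulrC b a) ab0 add0r.
have rv : regular_el v by apply: regularM.
have g2 : g * g = g * v.
  have bb : b * b = b * (a + b) by rewrite mulrDr (mulrC b a) ab0 add0r.
  have cc : c * c = c * (c + d) by rewrite [RHS]mulrDr cd0 addr0.
  rewrite /g /v; transitivity ((b * b) * (c * c)); first ring.
  by rewrite bb cc; ring.
have gX k : g ^+ k.+1 = g * v ^+ k.
  elim: k => [|k IHk]; first by rewrite expr1 expr0 mulr1.
  by rewrite exprSr IHk -mulrA mulrCA g2 mulrCA -exprSr.
have [k gk] : nilpotent_el g by rewrite gE; apply: nilpotentMl.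
rewrite -gE; apply: (regularX (k := k) rv).
by rewrite mulrC -gX exprS gk mulr0.
Qed.

End Nilpotent.

Section Ideal.

Variables (R : comNzRingType) (I : {pred R}).

Lemma exprD_subr_ideal : is_ideal I ->
  forall a i k, i \in I -> (a + i) ^+ k - a ^+ k \in I.
Proof.
case=> I0 ID _ IM a i k iI; elim: k => [|k IHk]; first by rewrite subrr.
have -> : (a + i) ^+ k.+1 - a ^+ k.+1 = a ^+ k * i + (a + i) * ((a + i) ^+ k - a ^+ k).
  by rewrite !exprS; ring.
by apply: ID; apply: IM.
Qed.

Lemma nilpotentD_nil_ideal : nil_ideal I ->
  forall a i, i \in I -> nilpotent_el (a + i) <-> nilpotent_el a.
Proof.
move=> [Iid Inil] a i iI; have Ik k := exprD_subr_ideal Iid a k iI.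
case: Iid => _ _ IN _.
split=> [[k aik]|[k ak]]; move: (Ik k).
  by rewrite aik sub0r => /IN; rewrite opprK => /Inil /nilpotent_of_expr.
by rewrite ak subr0 => /Inil /nilpotent_of_expr.
Qed.

End Ideal.

Lemma propertyD_semi_complemented (R : comNzRingType) :
  propertyD R -> semi_complemented R.
Proof.
move=> D a na; exists 0; split; first by rewrite mulr0.
by rewrite addr0; apply/D.
Qed.

Lemma semi_complemented_propertyD (R : comNzRingType) (I : {pred R}) :
  nil_ideal I -> (exists x, x \in I /\ x != 0) ->
  semi_complemented R -> propertyD R.
Proof.
move=> Inl [x [xI nx0]] sc a; split; last exact: regular_not_nilpotent.
move=> na; have [b [ab0 rab]] := sc a na.
have xn : nilpotent_el x by case: Inl => _; apply.
have naxn c : ~ nilpotent_el c -> ~ nilpotent_el (c + x).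
  by move=> nc; rewrite (nilpotentD_nil_ideal Inl _ xI).
have bx0 : b * x = 0.
  exact: complemented_addr_nilpotent ab0 rab xn (sc _ (naxn _ na)).
have [nb|nb] := classic (nilpotent_el b).
  by rewrite -[a](addrK b); apply: regularD_nilpotent (nilpotentN nb).
have ax0 : a * x = 0.
  rewrite addrC in rab; rewrite mulrC in ab0.
  exact: complemented_addr_nilpotent ab0 rab xn (sc _ (naxn _ nb)).
by case/eqP: nx0; apply: rab; rewrite mulrDl ax0 bx0 addr0.
Qed.

Section Morphism.

Variables (S T : comNzRingType) (f : {rmorphism S -> T}).
Hypothesis f_inj : injective f.

Lemma nilpotent_rmorph s : nilpotent_el (f s) <-> nilpotent_el s.
Proof.
split=> -[k sk]; exists k; last by rewrite -rmorphXn sk rmorph0.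
by apply: f_inj; rewrite rmorphXn sk rmorph0.
Qed.

Lemma regular_rmorph_propertyD s :
  propertyD T -> ~ nilpotent_el s -> regular_el (f s).
Proof. by move=> DT ns; apply/DT; rewrite nilpotent_rmorph. Qed.

Lemma propertyD_rmorph : propertyD T -> propertyD S.
Proof.
move=> DT s; split=> [ns y sy0|]; last exact: regular_not_nilpotent.
apply: f_inj; rewrite rmorph0; apply: (regular_rmorph_propertyD DT ns).
by rewrite -rmorphM sy0 rmorph0.
Qed.

Lemma torsion_free_propertyD (I : {pred T}) :
  propertyD T -> torsion_free_via f I.
Proof.
move=> DT r m rr _.
exact: regular_rmorph_propertyD DT (regular_not_nilpotent rr) m.
Qed.

End Morphism.

Section Decomposition.

Variables (S T : comNzRingType) (f : {rmorphism S -> T}) (I : {pred T}).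
Hypotheses (f_inj : injective f) (Inl : nil_ideal I).
Hypothesis T_decomp : forall t : T, exists (s : S) (i : T), i \in I /\ t = f s + i.
Hypothesis S_capI : forall s : S, f s \in I -> s = 0.

Lemma regular_rmorphD_ideal s i :
  torsion_free_via f I -> regular_el s -> i \in I -> regular_el (f s + i).
Proof.
case: Inl => -[_ ID IN IM] Inil tf rs iI y ty0.
have [s' [j [jI yE]]] := T_decomp y.
have ss'0 : s * s' = 0.
  apply: S_capI; have -> : f (s * s') = - (f s * j + i * y).
    by apply/eqP; rewrite -addr_eq0 rmorphM -ty0 yE; apply/eqP; ring.
  by apply: IN; apply: ID; [apply: IM | rewrite mulrC; apply: IM].
move: ty0; rewrite yE (rs _ ss'0) rmorph0 add0r => ty0.
have [k skj0] := mulr_addr_nilpotent_exp ty0 (Inil _ iI).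
by apply: (tf (s ^+ k)) => //; [apply: regularX | rewrite rmorphXn].
Qed.

Lemma propertyD_decomposition :
  propertyD S -> torsion_free_via f I -> propertyD T.
Proof.
move=> DS tf t; split=> [nt|]; last exact: regular_not_nilpotent.
have [s [i [iI tE]]] := T_decomp t; rewrite tE in nt *.
have ns : ~ nilpotent_el s.
  by move=> /(nilpotent_rmorph f_inj) /(nilpotentD_nil_ideal Inl _ iI).
by apply: regular_rmorphD_ideal => //; apply/DS.
Qed.

End Decomposition.

Unset Implicit Arguments. Set Strict Implicit.

Theorem mainTheorem2 (T S : comNzRingType) (f : {rmorphism S -> T})
  (I : {pred T}) :
  injective f ->
  nil_ideal I ->
  (exists x : T, x \in I /\ x != 0) ->
  (forall t : T, exists (s : S) (i : T), i \in I /\ t = f s + i) ->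
  (forall s : S, f s \in I -> s = 0) ->
  [/\ (semi_complemented T <-> propertyD T),
      (propertyD T <-> (propertyD S /\ torsion_free_via f I)) &
      (semi_complemented T <-> (propertyD S /\ torsion_free_via f I))].
Proof.
move=> f_inj Inl nzI T_decomp S_capI.
have sc_D : semi_complemented T <-> propertyD T.
  split; first exact: semi_complemented_propertyD Inl nzI.
  exact: propertyD_semi_complemented.
have D_ST : propertyD T <-> propertyD S /\ torsion_free_via f I.
  split=> [DT | [DS tf]]; last exact: propertyD_decomposition f_inj Inl T_decomp S_capI DS tf.
  by split; [exact: propertyD_rmorph f_inj DT | exact: (torsion_free_propertyD f_inj DT)].
by split=> //; rewrite sc_D.
Qed.
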